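(* Let $p\ge3$ and let $H$ be a graph with vertex set $A\cup B\cup\{v\}$ such that $A$, $B$, $\{v\}$ are pairwise disjoint; $A$ and $B$ are independent sets complete to each other; $|A|\ge p$ and $|B|\ge p$; $v$ has at least two neighbours in $A\cup B$; and $v$ has a neighbour and a non-neighbour in at least one of the sets $A$, $B$. Then $H\xrightarrow{\cap} X_p$ or $H\xrightarrow{\cap} Y_p$. In particular, if $p\ge 3t^2+t+1$ for some $t\in\mathbb{N}$, then $H\xrightarrow{\cap} tS_{t,t,t}$.
   Context: All graphs are finite and simple. For graphs $G_1=(V_1,E_1)$, $G_2=(V_2,E_2)$, $G_1\cap G_2=(V_1\cap V_2, E_1\cap E_2)$. For a graph $G=(V,E)$ and an injective map $\alpha$ on $V$, $G^{\alpha}$ has vertex set $\alpha(V)$ and edge set $\{\{\alpha(v),\alpha(w)\}: \{v,w\}\in E\}$. We write $G\xrightarrow{\cap} H$ if $H$ is (isomorphic to) $G^{\alpha_1}\cap\cdots\cap G^{\alpha_k}$ for some $k\ge1$ and injective maps $\alpha_1,\dots,\alpha_k$ on $V(G)$. For integers $a,b,c\ge1$, $S_{a,b,c}$ is the tree consisting of a vertex of degree $3$ together with three pendant paths having $a$, $b$, $c$ edges respectively; $tS_{t,t,t}$ is the disjoint union of $t$ copies of $S_{t,t,t}$. $X_p$ is the graph obtained from $K_{p,p}$ by adding a new vertex adjacent to exactly two vertices, both in the same part; $Y_p$ is obtained from $K_{p,p}$ by adding a new vertex adjacent to exactly two vertices, one in each part. *)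

From mathcomp Require Import all_boot.
Set Implicit Arguments. Unset Strict Implicit. Unset Printing Implicit Defensive.

Definition simple_graph (T : finType) (E : rel T) : Prop :=
  symmetric E /\ irreflexive E.

(* G -->cap H : H is isomorphic to G^{a_1} cap ... cap G^{a_k} for some k >= 1
   and injective maps a_i on V(G).  The common codomain of the maps is nat
   (any finitely many finite images can be relabelled into nat).
   The intersection has vertex set the intersection of the images a_i(V) and
   edge {u,w} iff for every i it is the image under a_i of an edge of G. *)
Definition cap_edge (T : finType) (E : rel T) (a : T -> nat) (u w : nat) : Prop :=
  exists x y, a x = u /\ a y = w /\ E x y.

Definition intersects_to (T : finType) (E : rel T) (S : finType) (F : rel S) : Prop :=
  exists (k : nat) (alpha : 'I_k.+1 -> T -> nat),
    (forall i, injective (alpha i)) /\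
    exists phi : S -> nat,
      injective phi /\
      (forall u : nat, (forall i, exists x, alpha i x = u) <-> exists s, phi s = u) /\
      (forall s s' : S, F s s' <-> forall i, cap_edge E (alpha i) (phi s) (phi s')).

(* K_{p,p} on 'I_p + 'I_p, plus a new vertex None. *)
Definition Kpp_adj (p : nat) (x y : 'I_p + 'I_p) : bool :=
  match x, y with
  | inl _, inr _ | inr _, inl _ => true
  | _, _ => false
  end.

Definition X_new (p : nat) (x : 'I_p + 'I_p) : bool :=
  match x with inl i => (val i < 2)%N | inr _ => false end.

Definition Y_new (p : nat) (x : 'I_p + 'I_p) : bool :=
  match x with inl i => val i == 0 | inr j => val j == 0 end.

Definition ext_adj (p : nat) (N : 'I_p + 'I_p -> bool)
    (x y : option ('I_p + 'I_p)) : bool :=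
  match x, y with
  | Some a, Some b => Kpp_adj a b
  | None, Some b => N b
  | Some a, None => N a
  | None, None => false
  end.

Definition Xp_adj (p : nat) : rel (option ('I_p + 'I_p)) := ext_adj (@X_new p).
Definition Yp_adj (p : nat) : rel (option ('I_p + 'I_p)) := ext_adj (@Y_new p).

(* t S_{t,t,t}: vertices (c, None) = centre of copy c, (c, Some (b, i)) =
   vertex at distance i+1 from the centre on branch b (i < t). *)
Definition tS_vert (t : nat) := ('I_t * option ('I_3 * 'I_t))%type.

Definition S_adj1 (t : nat) (x y : option ('I_3 * 'I_t)) : bool :=
  match x, y with
  | None, Some (_, i) => val i == 0
  | Some (b, i), Some (b', j) => (b == b') && (val j == (val i).+1)
  | _, _ => false
  end.

Definition tS_adj (t : nat) : rel (tS_vert t) :=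
  fun x y => (x.1 == y.1) && (S_adj1 x.2 y.2 || S_adj1 y.2 x.2).

From mathcomp Require Import all_boot zify.
Set Implicit Arguments. Unset Strict Implicit. Unset Printing Implicit Defensive.

(* H -->cap G holds as soon as H has an embedding into G (an injective
   edge-preserving map) and every non-edge of H is a non-edge of the image of
   some embedding: intersect the images of all embeddings.  Here G is a
   biclique A, B plus an apex v.  Putting the two colour classes of a proper
   2-colouring of H into A and B gives embeddings, and independence of A and B
   separates non-edges inside a colour class.  The other non-edges are
   separated by sending one endpoint u to v and the other to a non-neighbour
   of v lying on the side of one of its neighbours; this needs the neighbours
   of u to be sent to neighbours of v.  For X_p and Y_p, u is the extra vertex;
   for t S_{t,t,t}, u is a vertex other than a centre, which has at most two
   neighbours, one on each side of the cut at u, so that the two pieces can be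
   recoloured independently. *)

(** * Intersections of embeddings *)

Definition embedding (S T : finType) (F : rel S) (E : rel T) (f : S -> T) :=
  injective f /\ {homo f : x y / F x y >-> E x y}.

Lemma enum_rank_nat_inj (U : finType) : injective (fun u : U => nat_of_ord (enum_rank u)).
Proof. by move=> x y /val_inj /enum_rank_inj. Qed.

Lemma ltn_enum_rank (U : finType) (u : U) : enum_rank u < #|U|.
Proof. exact: ltn_ord. Qed.

Section IntersectionOfEmbeddings.

Variables (S T : finType) (F : rel S) (E : rel T).

(* Vertices outside the image of the [j]-th map get labels used by no other map,
   so that with at least two maps only the common image survives in the
   intersection. *)
Definition image_label (j : nat) (f : S -> T) (x : T) : nat :=
  if [pick s | f s == x] is Some s then enum_rank s else #|S| + (j * #|T| + enum_rank x).

Lemma image_label_inj j f : injective (image_label j f).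
Proof.
move=> x y; rewrite /image_label.
case: pickP => [s /eqP <-|_]; case: pickP => [s' /eqP <-|_].
- by move/enum_rank_nat_inj ->.
- by move=> e; exfalso; have := ltn_enum_rank s; lia.
- by move=> e; exfalso; have := ltn_enum_rank s'; lia.
- by move/addnI/addnI/enum_rank_nat_inj.
Qed.

Lemma image_label_image j f : injective f -> forall s, image_label j f (f s) = enum_rank s.
Proof.
move=> f_inj s; rewrite /image_label; case: pickP => [s' /eqP /f_inj -> //|].
by move/(_ s); rewrite eqxx.
Qed.

Lemma image_labelK j f x s :
  injective f -> image_label j f x = enum_rank s -> x = f s.
Proof.
move=> f_inj; rewrite -(image_label_image j f_inj s); exact: image_label_inj.
Qed.

Lemma intersects_to_of_embeddings (h : nat -> S -> T) (k : nat) :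
  (forall i, embedding F E (h i)) ->
  (forall s s', ~~ F s s' -> exists2 i, i <= k & ~~ E (h i s) (h i s')) ->
  intersects_to E F.
Proof.
move=> h_emb separate; have h_inj i := (h_emb i).1.
exists k.+1, (fun i : 'I_k.+2 => image_label i (h i)).
split=> [i|]; first exact: image_label_inj.
exists (fun s => nat_of_ord (enum_rank s)); split; first exact: enum_rank_nat_inj.
split=> [u|s s'].
  split=> [in_all|[s <-] i]; last by exists (h i s); apply: image_label_image.
  have [x0 e0] := in_all ord0; have [x1 e1] := in_all (Ordinal (isT : 1 < k.+2)).
  move: e0 e1; rewrite /image_label.
  case: pickP => [s _ <- _|_ e0]; first by exists s.
  case: pickP => [s _|_] e1; exfalso.
    by have := ltn_enum_rank s; lia.
  by move: e0 e1; have := ltn_enum_rank x0; simpl nat_of_ord; lia.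
split=> [Fss' i|common].
  exists (h i s), (h i s'); rewrite !image_label_image //.
  by split=> //; split=> //; apply: (h_emb i).2.
apply/negPn/negP=> /separate[i ik /negP]; apply.
have ik2 : (i < k.+2)%N by lia.
have [x [y [ex [ey Exy]]]] := common (Ordinal ik2).
by rewrite -(image_labelK (h_inj i) ex) -(image_labelK (h_inj i) ey).
Qed.

Lemma intersects_to_of_separating :
  (exists f0, embedding F E f0) ->
  (forall s s', ~~ F s s' -> exists2 f, embedding F E f & ~~ E (f s) (f s')) ->
  intersects_to E F.
Proof.
move=> [f0 f0_emb] separate.
pose embeddingb (f : {ffun S -> T}) :=
  injectiveb f && [forall x, forall y, F x y ==> E (f x) (f y)].
have embeddingP (f : S -> T) : reflect (embedding F E f) (embeddingb (finfun f)).
  apply: (iffP andP) => [[/injectiveP f_inj /forallP f_homo]|[f_inj f_homo]].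
    split=> [x y|x y Fxy]; first by rewrite -!(ffunE f); apply: f_inj.
    by have /forallP/(_ y)/implyP := f_homo x; rewrite !ffunE; apply.
  split; first by apply/injectiveP=> x y; rewrite !ffunE => /f_inj.
  by apply/forallP=> x; apply/forallP=> y; rewrite !ffunE; apply/implyP/f_homo.
have ffun_embedding (g : {ffun S -> T}) : embeddingb g -> embedding F E g.
  by move=> gb; apply/embeddingP; rewrite ffunK.
pose L := [seq f <- enum {ffun S -> T} | embeddingb f].
have inL f : embedding F E f -> finfun f \in L.
  by move/embeddingP; rewrite mem_filter mem_enum andbT.
apply: (@intersects_to_of_embeddings (fun i => nth (finfun f0) L i) (size L)).
  move=> i; have [iL|Li] := ltnP i (size L).
    by have := mem_nth (finfun f0) iL; rewrite mem_filter => /andP[/ffun_embedding].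
  by rewrite nth_default //; apply/ffun_embedding/embeddingP.
move=> s s' /separate[f f_emb nEf]; exists (index (finfun f) L).
  by apply: ltnW; rewrite index_mem inL.
by rewrite nth_index ?inL // !ffunE.
Qed.

End IntersectionOfEmbeddings.

Lemma extend_injection (I U : finType) (D J : {set I}) (P : {set U}) (g : I -> U) :
  #|D| <= #|P| -> J \subset D -> {in J &, injective g} -> {in J, forall i, g i \in P} ->
  exists f, [/\ {in D &, injective f}, {in D, forall i, f i \in P} & {in J, f =1 g}].
Proof.
move=> DP JD g_inj gP.
have gJP : g @: J \subset P by apply/subsetP=> _ /imsetP[i iJ ->]; apply: gP.
pose r := enum (P :\: g @: J); pose c := enum (D :\: J).
have size_cr : size c <= size r.
  rewrite -!cardE !cardsD (setIidPr JD) (setIidPr gJP) card_in_imset //.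
  by have := subset_leq_card JD; lia.
pose f i := if i \in J then g i else nth (g i) r (index i c).
have fR i : i \in D -> i \notin J -> f i \in P :\: g @: J.
  move=> iD iJ; rewrite /f (negbTE iJ) -mem_enum; apply: mem_nth.
  by apply: leq_trans size_cr; rewrite index_mem mem_enum inE iJ.
exists f; split=> [i j iD jD|i iD|i iJ]; last by rewrite /f iJ.
- case: (boolP (i \in J)) => iJ; case: (boolP (j \in J)) => jJ.
  + by rewrite /f iJ jJ; apply: g_inj.
  + move=> fij; have := fR j jD jJ; rewrite -fij /f iJ inE.
    by rewrite (imset_f g iJ).
  + move=> fij; have := fR i iD iJ; rewrite fij /f jJ inE.
    by rewrite (imset_f g jJ).
  + have ir : index i c < size r.
      by apply: leq_trans size_cr; rewrite index_mem mem_enum inE iJ.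
    have jr : index j c < size r.
      by apply: leq_trans size_cr; rewrite index_mem mem_enum inE jJ.
    rewrite /f (negbTE iJ) (negbTE jJ) (set_nth_default (g i) _ jr) => /eqP.
    rewrite nth_uniq ?enum_uniq // => /eqP/(congr1 (nth i c)).
    by rewrite !nth_index // mem_enum inE ?iJ ?jJ.
- case: (boolP (i \in J)) => iJ; first by rewrite /f iJ gP.
  by have := fR i iD iJ; rewrite inE => /andP[].
Qed.

Lemma in_set3_injective (S U : finType) (x y z : S) (g : S -> U) :
  g x != g y -> g x != g z -> g y != g z -> {in [set x; y; z] &, injective g}.
Proof.
move=> xy xz yz a b; rewrite !inE -!orbA => /or3P[]/eqP-> /or3P[]/eqP-> //= /eqP;
  by rewrite ?(negbTE xy) ?(negbTE xz) ?(negbTE yz) // eq_sym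
    ?(negbTE xy) ?(negbTE xz) ?(negbTE yz).
Qed.

(** * Embeddings into a biclique with an apex *)

Record biclique_apex (T : finType) (E : rel T) (v : T) (P Q : {set T}) : Prop := {
  apex_sym : symmetric E;
  apex_irr : irreflexive E;
  apex_notin_P : v \notin P;
  apex_notin_Q : v \notin Q;
  biclique_disjoint : [disjoint P & Q];
  biclique_indep_P : forall x y, x \in P -> y \in P -> ~~ E x y;
  biclique_indep_Q : forall x y, x \in Q -> y \in Q -> ~~ E x y;
  biclique_complete : forall x y, x \in P -> y \in Q -> E x y }.

Section BicliqueApex.

Variables (T : finType) (E : rel T) (v : T) (P Q : {set T}).
Hypothesis G : biclique_apex E v P Q.

Definition side (b : bool) : {set T} := if b then P else Q.

Lemma apex_notin_side b : v \notin side b.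
Proof. by case: b; [apply: (apex_notin_P G)|apply: (apex_notin_Q G)]. Qed.

Lemma leq_card_side n b : n <= #|P| -> n <= #|Q| -> n <= #|side b|.
Proof. by case: b. Qed.

Lemma mem_side x : (x \in P) || (x \in Q) -> x \in side (x \in P).
Proof. by case: (boolP (x \in P)). Qed.

Lemma side_disjoint b b' x : x \in side b -> x \in side b' -> b = b'.
Proof.
have PQ := biclique_disjoint G.
by case: b; case: b' => //= xb xb'; [move: (disjointFr PQ xb)|move: (disjointFr PQ xb')];
  rewrite ?xb ?xb'.
Qed.

Lemma side_adj b b' x y : b != b' -> x \in side b -> y \in side b' -> E x y.
Proof.
case: b; case: b' => //= _ xb yb'; first exact: (biclique_complete G).
by rewrite (apex_sym G); apply: (biclique_complete G).
Qed.

Lemma side_nonadj b x y : x \in side b -> y \in side b -> ~~ E x y.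
Proof. by case: b; [apply: (biclique_indep_P G)|apply: (biclique_indep_Q G)]. Qed.

Lemma sided_injection (S : finType) (D W : {set S}) (col : S -> bool) (g : S -> T) :
  (forall b, #|[set s in D | col s == b]| <= #|side b|) -> W \subset D ->
  {in W &, injective g} -> {in W, forall s, g s \in side (col s)} ->
  exists f, [/\ {in D &, injective f}, {in D, forall s, f s \in side (col s)}
    & {in W, f =1 g}].
Proof.
move=> room WD g_inj gW.
pose class (X : {set S}) b := [set s in X | col s == b].
have part b : exists f, [/\ {in class D b &, injective f},
    {in class D b, forall s, f s \in side b} & {in class W b, f =1 g}].
  apply: extend_injection (room b) _ _ _.
  - by apply/subsetP => s; rewrite !inE => /andP[/(subsetP WD) -> ->].
  - by move=> s s'; rewrite !inE => /andP[sW _] /andP[s'W _]; apply: g_inj.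
  - by move=> s; rewrite inE => /andP[sW /eqP <-]; apply: gW.
have [fb fbP] : exists fb : bool -> S -> T, forall b, [/\ {in class D b &, injective (fb b)},
    {in class D b, forall s, fb b s \in side b} & {in class W b, fb b =1 g}].
  have [[ft ftP] [ff ffP]] := (part true, part false).
  by exists (fun b => if b then ft else ff); case.
have inD s : s \in D -> s \in class D (col s) by rewrite inE eqxx andbT.
have inW s : s \in W -> s \in class W (col s) by rewrite inE eqxx andbT.
exists (fun s => fb (col s) s); split=> [s s' sD s'D|s sD|s sW].
- have [fb_inj fbS _] := fbP (col s); have [_ fbS' _] := fbP (col s').
  move=> e; have col_ss' : col s = col s'.
    by apply: (side_disjoint (fbS _ (inD _ sD))); rewrite e; apply: fbS'; apply: inD.
  by move: e; rewrite -col_ss'; apply: fb_inj; rewrite ?inD // col_ss' inD.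
- by have [_ fbS _] := fbP (col s); apply: fbS; apply: inD.
- by have [_ _ fbg] := fbP (col s); apply: fbg; apply: inW.
Qed.

Lemma colouring_embedding (S : finType) (F : rel S) (col : S -> bool) :
  #|S| <= #|P| -> #|S| <= #|Q| -> (forall s s', F s s' -> col s != col s') ->
  exists f, embedding F E f /\ forall s, f s \in side (col s).
Proof.
move=> SP SQ proper.
have room b : #|[set s in setT | col s == b]| <= #|side b|.
  by apply: leq_trans (max_card _) (leq_card_side _ SP SQ).
have [|||f [f_inj fS _]] := @sided_injection S setT set0 col (fun _ => v) room.
- exact: sub0set.
- by move=> s; rewrite inE.
- by move=> s; rewrite inE.
exists f; split=> [|s]; last by apply: fS; rewrite inE.
split=> [s s'|s s' /proper col_ss']; first by apply: f_inj; rewrite inE.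
by apply: side_adj col_ss' _ _; apply: fS; rewrite inE.
Qed.


Lemma apex_embedding (S : finType) (F : rel S) (col : S -> bool) (u : S)
    (W : {set S}) (g : S -> T) :
  symmetric F -> (forall b, #|[set s in [set~ u] | col s == b]| <= #|side b|) ->
  u \notin W -> (forall y, F u y -> y \in W) ->
  {in W &, injective g} -> {in W, forall s, g s \in side (col s)} ->
  (forall y, F u y -> E v (g y)) ->
  (forall s s', F s s' -> s != u -> s' != u -> col s != col s') ->
  exists f, [/\ embedding F E f, f u = v, {in W, f =1 g}
    & forall s, s != u -> f s \in side (col s)].
Proof.
move=> F_sym room uW nbrW g_inj gS nbrE proper.
have WD : W \subset [set~ u].
  by apply/subsetP=> s sW; rewrite !inE; apply: contraNneq uW => <-.
have [f0 [f0_inj f0S f0g]] := sided_injection room WD g_inj gS.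
pose f s := if s == u then v else f0 s.
have fS s : s != u -> f s \in side (col s).
  by move=> su; rewrite /f (negbTE su); apply: f0S; rewrite !inE.
have fg : {in W, f =1 g}.
  by move=> s sW; rewrite /f ifN ?f0g //; move: (subsetP WD s sW); rewrite !inE.
have fv s : s != u -> f s != v.
  by move/fS; apply: contraTneq => ->; apply: apex_notin_side.
have fu : f u = v by rewrite /f eqxx.
have f_nbr y : F u y -> E v (f y) by move=> Fuy; rewrite fg ?nbrE ?nbrW.
exists f; split=> //.
split=> [s s'|s s'].
  case: (eqVneq s u) => [->|su]; case: (eqVneq s' u) => [->|s'u] //.
  - by move=> e; move: (fv _ s'u); rewrite -e fu eqxx.
  - by move=> e; move: (fv _ su); rewrite e fu eqxx.
  - by rewrite /f (negbTE su) (negbTE s'u); apply: f0_inj; rewrite !inE.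
case: (eqVneq s u) => [-> /f_nbr|su]; first by rewrite fu.
case: (eqVneq s' u) => [-> Fsu|s'u Fss'].
  by rewrite fu (apex_sym G) f_nbr // F_sym.
exact: side_adj (proper _ _ Fss' su s'u) (fS _ su) (fS _ s'u).
Qed.

Lemma cut_vertex_apex_embedding (S : finType) (F : rel S) (par piece : S -> bool)
    (u w : S) (b b' : bool) (zp zm z2 : T) :
  symmetric F -> #|S| <= #|P| -> #|S| <= #|Q| ->
  (forall s s', F s s' -> par s != par s') ->
  (forall s s', F s s' -> s != u -> s' != u -> piece s = piece s') ->
  (forall y y', F u y -> F u y' -> piece y = piece y' -> y = y') ->
  par u != par w -> ~~ F u w ->
  zp \in side b -> zm \in side b -> z2 \in side b' ->
  E v zp -> ~~ E v zm -> E v z2 -> zp != z2 ->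
  exists2 f, embedding F E f & ~~ E (f u) (f w).
Proof.
move=> F_sym SP SQ par_edge piece_edge piece_nbr par_uw nFuw
  zpS zmS z2S vzp vzm vz2 zp_z2.
(* Recolour the piece containing [w] so that [w] and the neighbour of [u] in it
   land on side [b] (that of [zm] and [zp]), and the other piece so that its
   neighbour of [u] lands on side [b'] (that of [z2]). *)
pose col x := par x (+) par w (+) (if piece x == piece w then b else b').
pose g x := if x == w then zm else if piece x == piece w then zp else z2.
have nbr_par y : F u y -> par y = par w.
  by move/par_edge; move: par_uw; case: (par u); case: (par y); case: (par w).
have nbr_w y : F u y -> y != w by apply: contraTneq => ->.
have g_nbr y : F u y -> g y = if piece y == piece w then zp else z2.
  by move=> Fuy; rewrite /g (negbTE (nbr_w _ Fuy)).
have zm_nbr y : F u y -> g y != zm.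
  move=> /g_nbr->; case: ifP => _; apply: contraNneq vzm => <- //.
have [|||||||f [f_emb fu fg _]] := @apex_embedding S F col u (w |: [set y | F u y]) g F_sym.
- by move=> b0; apply: leq_trans (max_card _) (leq_card_side _ SP SQ).
- rewrite !inE negb_or; apply/andP; split; last by apply/negP=> /par_edge; rewrite eqxx.
  by apply: contraNneq par_uw => ->.
- by move=> y Fuy; rewrite !inE Fuy orbT.
- move=> x y; rewrite !inE => /predU1P[->|Fux] /predU1P[->|Fuy] //.
  + by rewrite {1}/g eqxx => /esym/eqP; rewrite (negbTE (zm_nbr _ Fuy)).
  + by rewrite {2}/g eqxx => /eqP; rewrite (negbTE (zm_nbr _ Fux)).
  + rewrite !g_nbr // => e; apply: piece_nbr Fux Fuy _; move: e.
    case: (eqVneq (piece x) (piece w)) => [->|pxw];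
      case: (eqVneq (piece y) (piece w)) => [->|pyw] // e.
    * by move: zp_z2; rewrite e eqxx.
    * by move: zp_z2; rewrite e eqxx.
    * by move: pxw pyw; case: (piece x); case: (piece y); case: (piece w).
- move=> x; rewrite !inE /col => /predU1P[->|Fux]; first by rewrite /g !eqxx addbb.
  by rewrite g_nbr // nbr_par // addbb; case: ifP.
- by move=> y Fuy; rewrite g_nbr //; case: ifP.
- move=> s s' Fss' su s'u; rewrite /col (piece_edge _ _ Fss' su s'u).
  by rewrite -!addbA; move: (par_edge _ _ Fss'); case: (par s); case: (par s');
    case: (par w (+) _).
exists f => //; rewrite fu fg; last by rewrite !inE eqxx.
by rewrite /g eqxx.
Qed.

End BicliqueApex.

(** * K_{p,p} plus a vertex, and t S_{t,t,t} *)

Definition biclique_col p (c : bool) (x : option ('I_p + 'I_p)) : bool :=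
  if x is Some (inr _) then ~~ c else c.

Lemma ext_adj_sym p (N : 'I_p + 'I_p -> bool) : symmetric (ext_adj N).
Proof. by case=> [[i|j]|] [[i'|j']|]. Qed.

Lemma biclique_col_adj p c (x y : 'I_p + 'I_p) :
  Kpp_adj x y -> biclique_col c (Some x) != biclique_col c (Some y).
Proof. by case: x => ?; case: y => ? //=; case: c. Qed.

Lemma biclique_col_nonadj p c (x y : 'I_p + 'I_p) :
  ~~ Kpp_adj x y -> biclique_col c (Some x) = biclique_col c (Some y).
Proof. by case: x => ?; case: y => ?. Qed.

Lemma card_biclique_class p c b :
  #|[set s in [set~ None] | @biclique_col p c s == b]| <= p.
Proof.
pose emb i : option ('I_p + 'I_p) := Some (if b == c then inl i else inr i).
apply: (leq_trans (subset_leq_card (_ : _ \subset emb @: setT))).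
  apply/subsetP => [[[i|j]|]]; rewrite !inE //= => cb; apply/imsetP.
    by exists i; rewrite // /emb (_ : b == c); move: cb; case: (b); case: (c).
  by exists j; rewrite // /emb (_ : b == c = false); move: cb; case: (b); case: (c).
by rewrite (leq_trans (leq_imset_card _ _)) // cardsT card_ord.
Qed.

Lemma ltn_neq_succ (m n : nat) : m != n -> (m < n.+1) = (m < n).
Proof. by rewrite ltnS leq_eqVlt => /negbTE->. Qed.

Definition odd_depth t (x : tS_vert t) : bool :=
  if x.2 is Some (_, i) then odd i.+1 else false.

Definition beyond t (u x : tS_vert t) : bool :=
  if (u.2, x.2) is (Some (b, i), Some (b', j)) then [&& x.1 == u.1, b' == b & i < j]
  else false.

Lemma tS_adj_sym t : symmetric (@tS_adj t).
Proof. by move=> x y; rewrite /tS_adj eq_sym orbC. Qed.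

Lemma odd_depth_adj t (x y : tS_vert t) : tS_adj x y -> odd_depth x != odd_depth y.
Proof.
case: x => c [[b i]|]; case: y => c' [[b' j]|]; rewrite /tS_adj /odd_depth /= ?orbF ?andbF //.
- by case/andP=> _ /orP[]/andP[_ /eqP->] /=; case: (odd _).
- by case/andP=> _ /eqP->.
- by case/andP=> _ /eqP->.
Qed.

Lemma beyond_adj t (u x y : tS_vert t) :
  tS_adj x y -> x != u -> y != u -> beyond u x = beyond u y.
Proof.
case: u => cu [[bu iu]|] //; case: x => c [[b i]|]; case: y => c' [[b' j]|];
  rewrite /tS_adj /beyond /= ?orbF //.
- case/andP=> /eqP <- /orP[]/andP[/eqP <- /eqP ->] xu yu;
    case: (_ =P cu) => [cE|//]; case: (_ =P bu) => [bE|//] /=; subst;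
    rewrite ltn_neq_succ //;
    first [by apply: contraNneq xu => /ord_inj-> | by apply: contraNneq yu => /ord_inj->].
- by case/andP=> _ /eqP->; rewrite ltn0 !andbF.
- by case/andP=> _ /eqP->; rewrite ltn0 !andbF.
Qed.


Lemma beyond_nbr t (u : tS_vert t) : u.2 != None ->
  forall y y', tS_adj u y -> tS_adj u y' -> beyond u y = beyond u y' -> y = y'.
Proof.
case: u => cu [[bu iu]|] // _ y y'; case: y => c [[b i]|]; case: y' => c' [[b' i']|];
  rewrite /tS_adj /beyond /= ?orbF ?andbF //.
- case/andP=> /eqP<- /orP[]/andP[/eqP<- /eqP ei]; case/andP=> /eqP<- /orP[]/andP[/eqP eb /eqP ei'];
    subst; rewrite !eqxx /= => h; congr (_, Some (_, _)); apply: ord_inj; lia.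
- case/andP=> /eqP<- /orP[]/andP[/eqP<- /eqP ei] /andP[_ /eqP iu0];
    rewrite !eqxx /= => h; exfalso; lia.
- case/andP=> _ /eqP iu0 /andP[/eqP<- /orP[]/andP[/eqP<- /eqP ei]];
    rewrite !eqxx /= => h; exfalso; lia.
- by case/andP=> /eqP<- _ /andP[/eqP<- _].
Qed.

Lemma card_tS_vert t : #|{: 'I_t * option ('I_3 * 'I_t)}| = 3 * t ^ 2 + t.
Proof.
by rewrite card_prod card_option card_prod !card_ord mulnS addnC mulnCA mulnn.
Qed.

Section ApexIntersections.

Variables (T : finType) (E : rel T) (v : T) (P Q : {set T}).
Hypothesis G : biclique_apex E v P Q.
Local Notation side := (side P Q).

Lemma ext_adj_apex_embedding p (N : 'I_p + 'I_p -> bool) (c : bool)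
    (n1 n2 w : 'I_p + 'I_p) (y1 y2 z : T) :
  p <= #|P| -> p <= #|Q| -> (forall x, N x = (x == n1) || (x == n2)) ->
  n1 != n2 -> ~~ N w ->
  y1 \in side (biclique_col c (Some n1)) -> y2 \in side (biclique_col c (Some n2)) ->
  z \in side (biclique_col c (Some w)) ->
  y1 != y2 -> E v y1 -> E v y2 -> ~~ E v z ->
  exists f, [/\ embedding (ext_adj N) E f, f None = v,
    forall x, f (Some x) \in side (biclique_col c (Some x)) & f (Some w) = z].
Proof.
move=> pP pQ N_nbrs n12 Nw y1S y2S zS y12 vy1 vy2 vz.
have [wn1 wn2] : w != n1 /\ w != n2 by apply/andP; rewrite -negb_or -N_nbrs.
pose g y := if y == Some w then z else if y == Some n1 then y1 else y2.
have gw : g (Some w) = z by rewrite /g eqxx.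
have gn1 : g (Some n1) = y1.
  by rewrite /g !(inj_eq Some_inj) eq_sym (negbTE wn1) eqxx.
have gn2 : g (Some n2) = y2.
  by rewrite /g !(inj_eq Some_inj) !(eq_sym n2) (negbTE wn2) (negbTE n12).
have nbr_z y : E v y -> y != z by move=> vy; apply: contraTneq vy => ->.
have [|||||||f [f_emb fv fg fS]] := apex_embedding G (col := biclique_col c) (u := None)
  (W := [set Some n1; Some n2; Some w]) (g := g) (@ext_adj_sym p N).
- by move=> b; apply: leq_trans (@card_biclique_class p c b) (leq_card_side _ pP pQ).
- by rewrite !in_setU !in_set1.
- by case=> [x|] //=; rewrite N_nbrs !inE => /orP[]/eqP->; rewrite eqxx ?orbT.
- by apply: in_set3_injective; rewrite ?gn1 ?gn2 ?gw ?nbr_z.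
- by move=> y; rewrite !inE -!orbA => /or3P[]/eqP->; rewrite ?gn1 ?gn2 ?gw.
- by case=> [x|] //=; rewrite N_nbrs => /orP[]/eqP->; rewrite ?gn1 ?gn2.
- by case=> [x|] [y|] //= Kxy _ _; apply: biclique_col_adj.
exists f; split=> // [x|]; first exact: fS.
by rewrite fg ?gw // !inE eqxx orbT.
Qed.

Lemma ext_adj_intersects p (N : 'I_p + 'I_p -> bool) (x0 : 'I_p + 'I_p) :
  ~~ N x0 ->
  (forall x, ~~ N x -> exists c f, [/\ embedding (ext_adj N) E f, f None = v,
     forall y, f (Some y) \in side (biclique_col c (Some y)) & ~~ E v (f (Some x))]) ->
  intersects_to E (ext_adj N).
Proof.
move=> Nx0 separate; have [c0 [f0 [f0_emb f0v f0S _]]] := separate x0 Nx0.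
apply: intersects_to_of_separating; first by exists f0.
case=> [x|] [y|] /= nN.
- exists f0 => //; apply: (side_nonadj G (f0S x)).
  by rewrite (biclique_col_nonadj c0 nN); apply: f0S.
- by have [c [f [f_emb fv _ nE]]] := separate x nN; exists f; rewrite // fv (apex_sym G).
- by have [c [f [f_emb fv _ nE]]] := separate y nN; exists f; rewrite // fv.
- by exists f0; rewrite // f0v (apex_irr G).
Qed.

Lemma Xp_intersection p (c : bool) (a1 a2 z : T) :
  2 < p -> p <= #|P| -> p <= #|Q| ->
  a1 \in side c -> a2 \in side c -> a1 != a2 -> E v a1 -> E v a2 ->
  z \in side c -> ~~ E v z -> (forall y, y \in side (~~ c) -> ~~ E v y) ->
  intersects_to E (@Xp_adj p).
Proof.
move=> p2 pP pQ a1S a2S a12 va1 va2 zS vz no_nbr.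
pose i0 : 'I_p := Ordinal (ltnW (ltnW p2)); pose i1 : 'I_p := Ordinal (ltnW p2).
have X_nbrs x : X_new x = (x == inl i0) || (x == inl i1).
  by case: x => [[[|[|k]] ?]|] //=.
have separate_left (i : 'I_p) : ~~ X_new (inl i) -> exists f,
    [/\ embedding (@Xp_adj p) E f, f None = v,
      forall x, f (Some x) \in side (biclique_col c (Some x)) & f (Some (inl i)) = z].
  by move=> Ni; apply: ext_adj_apex_embedding pP pQ X_nbrs _ Ni a1S a2S zS a12 va1 va2 vz.
apply: (@ext_adj_intersects _ _ (inl (Ordinal p2))) => // -[i|j] Nx.
- by have [f [f_emb fv fS fz]] := separate_left i Nx; exists c, f; rewrite fz.
- have [f [f_emb fv fS _]] := separate_left (Ordinal p2) isT.
  by exists c, f; split=> //; apply: no_nbr (fS (inr j)).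
Qed.

Lemma Yp_intersection p (c : bool) (a b z : T) :
  1 < p -> p <= #|P| -> p <= #|Q| -> a \in side c -> b \in side (~~ c) ->
  E v a -> E v b -> z \in side c -> ~~ E v z -> intersects_to E (@Yp_adj p).
Proof.
move=> p1 pP pQ aS bS va vb zS vz.
pose i0 : 'I_p := Ordinal (ltnW p1).
have Y_nbrs x : Y_new x = (x == inl i0) || (x == inr i0).
  by case: x => [[[|k] ?]|[[|k] ?]].
pose nbr d := if d == c then a else b.
have nbrS d : nbr d \in side d.
  by rewrite /nbr; case: (eqVneq d c) => [->//|]; move: bS; case: d; case: (c).
have nbrE d : E v (nbr d) by rewrite /nbr; case: ifP.
apply: (@ext_adj_intersects _ _ (inl (Ordinal p1))) => // x Nx.
have [c' zS'] : exists c', z \in side (biclique_col c' (Some x)).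
  by case: x {Nx} => ?; [exists c|exists (~~ c)]; rewrite /= ?negbK.
have nbr_c' : nbr c' != nbr (~~ c').
  apply/eqP=> e; move: (nbrS c'); rewrite e => /(side_disjoint G)/(_ (nbrS _)).
  by case: (c').
have [f [f_emb fv fS fz]] := ext_adj_apex_embedding pP pQ Y_nbrs isT Nx
  (nbrS c') (nbrS (~~ c')) zS' nbr_c' (nbrE _) (nbrE _) vz.
by exists c', f; rewrite fz.
Qed.

Lemma tS_intersection t (b b' : bool) (zp zm z2 : T) :
  #|{: 'I_t * option ('I_3 * 'I_t)}| <= #|P| -> #|{: 'I_t * option ('I_3 * 'I_t)}| <= #|Q| ->
  zp \in side b -> zm \in side b -> z2 \in side b' ->
  E v zp -> ~~ E v zm -> E v z2 -> zp != z2 ->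
  intersects_to E (@tS_adj t).
Proof.
move=> SP SQ zpS zmS z2S vzp vzm vz2 zp_z2.
have [f0 [f0_emb f0S]] := colouring_embedding G SP SQ (@odd_depth_adj t).
apply: intersects_to_of_separating; first by exists f0.
have cut (u w : tS_vert t) : u.2 != None -> odd_depth u != odd_depth w -> ~~ tS_adj u w ->
    exists2 f, embedding (@tS_adj t) E f & ~~ E (f u) (f w).
  move=> u_branch par_uw nFuw.
  exact: (cut_vertex_apex_embedding G (@tS_adj_sym t) SP SQ (@odd_depth_adj t)
    (@beyond_adj t u) (beyond_nbr u_branch) par_uw nFuw zpS zmS z2S vzp vzm vz2 zp_z2).
(* Two centres have the same depth parity, so when parities differ one of [s],
   [s'] is a branch vertex, which can serve as the cut vertex. *)
move=> s s' nFss'; case: (eqVneq (odd_depth s) (odd_depth s')) => [par_ss'|par_ss'].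
  by exists f0; rewrite // (side_nonadj G (f0S s)) // par_ss'.
case: (eqVneq s.2 None) => [s_centre|]; last by move/cut; apply.
have s'_branch : s'.2 != None by move: par_ss'; rewrite /odd_depth s_centre; case: (s'.2).
have [||f f_emb nE] := cut s' s s'_branch.
- by rewrite eq_sym.
- by rewrite tS_adj_sym.
by exists f; rewrite // (apex_sym G).
Qed.

Lemma Xp_or_Yp_intersection p b (zp zm x1 x2 : T) :
  2 < p -> p <= #|P| -> p <= #|Q| ->
  zp \in side b -> zm \in side b -> E v zp -> ~~ E v zm ->
  (x1 \in P) || (x1 \in Q) -> (x2 \in P) || (x2 \in Q) -> x1 != x2 -> E v x1 -> E v x2 ->
  intersects_to E (@Xp_adj p) \/ intersects_to E (@Yp_adj p).
Proof.
move=> p2 pP pQ zpS zmS vzp vzm x1PQ x2PQ x12 vx1 vx2.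
case: (boolP [exists y in side (~~ b), E v y]) => [/exists_inP[y yS vy]|/exists_inPn no_nbr].
  by right; apply: (Yp_intersection (ltnW p2) pP pQ zpS yS vzp vy zmS vzm).
have in_b x : (x \in P) || (x \in Q) -> E v x -> x \in side b.
  move=> /mem_side xS vx; case: (eqVneq (x \in P) b) => [<- //|ne].
  have xP : (x \in P) = ~~ b by move: ne; case: (x \in P); case: (b).
  by rewrite xP in xS; move: (no_nbr x xS); rewrite vx.
left; apply: (Xp_intersection p2 pP pQ (in_b _ x1PQ vx1) (in_b _ x2PQ vx2) x12 vx1 vx2
  zmS vzm no_nbr).
Qed.

End ApexIntersections.

Theorem mainTheorem7 (p : nat) (T : finType) (E : rel T)
    (A B : {set T}) (v : T) :
  (3 <= p)%N ->
  simple_graph E ->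
  [set: T] = A :|: B :|: [set v] ->
  [disjoint A & B] -> v \notin A -> v \notin B ->
  (forall x y, x \in A -> y \in A -> ~~ E x y) ->
  (forall x y, x \in B -> y \in B -> ~~ E x y) ->
  (forall x y, x \in A -> y \in B -> E x y) ->
  (p <= #|A|)%N -> (p <= #|B|)%N ->
  (2 <= #|[set x in A :|: B | E v x]|)%N ->
  ((exists2 x, x \in A & E v x) /\ (exists2 y, y \in A & ~~ E v y) \/
   (exists2 x, x \in B & E v x) /\ (exists2 y, y \in B & ~~ E v y)) ->
  (intersects_to E (@Xp_adj p) \/ intersects_to E (@Yp_adj p)) /\
  (forall t : nat, (3 * t ^ 2 + t + 1 <= p)%N -> intersects_to E (@tS_adj t)).
Proof.
move=> p3 [E_sym E_irr] _ AB vA vB indA indB cAB pA pB /card_gt1P[x1 [x2 [+ + x12]]].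
rewrite !inE => /andP[x1AB vx1] /andP[x2AB vx2] nbr_mixed.
have G : biclique_apex E v A B by split.
have [b [[zp zpS vzp] [zm zmS vzm]]] : exists b,
    (exists2 x, x \in side A B b & E v x) /\ (exists2 y, y \in side A B b & ~~ E v y).
  by case: nbr_mixed; [exists true|exists false].
split; first exact: (Xp_or_Yp_intersection G p3 pA pB zpS zmS vzp vzm x1AB x2AB x12 vx1 vx2).
move=> t tp; have room : #|{: 'I_t * option ('I_3 * 'I_t)}| <= p.
  by rewrite card_tS_vert ltnW // -addn1.
have [z2 [z2AB vz2 zp_z2]] : exists z2, [/\ (z2 \in A) || (z2 \in B), E v z2 & zp != z2].
  by case: (eqVneq zp x1) => [->|]; [exists x2|exists x1].
exact: (tS_intersection G (leq_trans room pA) (leq_trans room pB) zpS zmS (mem_side z2AB)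
  vzp vzm vz2 zp_z2).
Qed.
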